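(* Let $v$ and $v'$ be distinct true twin vertices of a graph $G$ and $S$ a DNS of $G$. Then: (1) for every $x\in\widehat S$ and $i\in\{1,2\}$, if $v'\in N_S^i[x]$ then $v\in N_S^i[x]$; (2) if $v,v'\in\widehat S$, then there exists a DNS $S'$ of $G$ with $\widehat{S'}=\widehat S$ in which $v$ and $v'$ appear consecutively.
   Context: Graphs are finite, simple, undirected; $N[v]$ closed neighborhood; $v,v'$ are true twins if $N[v]=N[v']$. A sequence $S=(v_1,\dots,v_k)$ of distinct vertices is a double neighborhood sequence (DNS) if for each $i$ some $w\in N[v_i]$ satisfies $|\{j<i:w\in N[v_j]\}|\le1$. $\widehat S$ is its vertex set. $N_S^1[v_i]=N[v_i]\setminus\bigcup_{j<i}N[v_j]$ and $N_S^2[v_i]=\{w\in N[v_i]:|\{j<i:w\in N[v_j]\}|=1\}$. *)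

From mathcomp Require Import all_boot.
Set Implicit Arguments. Unset Strict Implicit. Unset Printing Implicit Defensive.

(* A finite simple undirected graph is a relation e on a finType T that is
   symmetric and irreflexive (assumed as hypotheses in the theorem). *)

Definition cnbh (T : finType) (e : rel T) (v : T) : {set T} :=
  [set w | (w == v) || e v w].

Definition cover_count (T : finType) (e : rel T) (p : seq T) (w : T) : nat :=
  count (fun u => w \in cnbh e u) p.

Definition is_DNS (T : finType) (e : rel T) (S : seq T) : Prop :=
  uniq S /\
  forall (p q : seq T) (x : T), S = p ++ x :: q ->
    exists w, w \in cnbh e x /\ cover_count e p w <= 1.

Definition NS1 (T : finType) (e : rel T) (S : seq T) (x : T) : {set T} :=
  [set w in cnbh e x | cover_count e (take (index x S) S) w == 0].

Definition NS2 (T : finType) (e : rel T) (S : seq T) (x : T) : {set T} :=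
  [set w in cnbh e x | cover_count e (take (index x S) S) w == 1].

(** True twins lie in exactly the same closed neighbourhoods, so every prefix
    of a sequence covers [v] and [v'] equally often; this gives (1), even with
    equivalences.  For (2), say [v] comes first and let it walk forward, one
    adjacent transposition at a time, until it sits just before [v'].  A vertex
    that [v] overtakes only loses [v] from its prefix, vertices after the pair
    keep the same prefix up to order, and [v] itself stays legal because
    [N[v] = N[v']]: the witness for [v'] in [S] also serves for [v], whose new
    prefix is contained in the prefix of [v']. *)

From mathcomp Require Import all_boot.

Set Implicit Arguments.
Unset Strict Implicit.
Unset Printing Implicit Defensive.

Lemma take_index_uniq (T : eqType) (s s1 s2 : seq T) x :
  uniq s -> s = s1 ++ x :: s2 -> take (index x s) s = s1.
Proof.
move=> uS defs; move: uS; rewrite defs cat_uniq /= negb_or => /and3P[_ /andP[xNs1 _] _].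
by rewrite index_cat (negbTE xNs1) /= eqxx addn0 take_size_cat.
Qed.

Lemma perm_swap_cons (T : eqType) (a c : seq T) u y :
  perm_eq (a ++ u :: y :: c) (a ++ y :: u :: c).
Proof. by rewrite perm_cat2l (perm_catCA [:: u] [:: y] c). Qed.

Lemma perm_move_cons (T : eqType) (a b c : seq T) u u' :
  perm_eq (a ++ u :: b ++ u' :: c) (a ++ b ++ u :: u' :: c).
Proof. by rewrite perm_cat2l -cat1s perm_catCA. Qed.

Section DoubleNeighbourhoodSequence.
Variables (T : finType) (e : rel T).

Definition legal (p : seq T) (x : T) :=
  exists w, w \in cnbh e x /\ cover_count e p w <= 1.

Lemma legal_le p p' x :
  (forall w, cover_count e p' w <= cover_count e p w) -> legal p x -> legal p' x.
Proof. by move=> le_p'p [w [wx cw]]; exists w; split=> //; apply: leq_trans cw. Qed.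

Lemma legal_perm p p' x : perm_eq p p' -> legal p x -> legal p' x.
Proof. by move=> /permP pp'; apply: legal_le => w; rewrite /cover_count pp'. Qed.

Lemma is_DNS_splits S :
  uniq S -> {in S, forall x, exists p q, S = p ++ x :: q /\ legal p x} ->
  is_DNS e S.
Proof.
move=> uS legS; split=> // p q x defS.
have [|p' [q' [defS' lx]]] := legS x; first by rewrite defS mem_cat mem_head orbT.
by rewrite -(take_index_uniq uS defS) (take_index_uniq uS defS').
Qed.

Lemma is_DNS_swap a c u y :
  is_DNS e (a ++ u :: y :: c) -> legal (rcons a y) u -> is_DNS e (a ++ y :: u :: c).
Proof.
move=> [uS legS] legu.
have pS := perm_swap_cons a c u y.
apply: is_DNS_splits; first by rewrite -(perm_uniq pS).
move=> x; rewrite mem_cat !inE => /or4P[xa|/eqP->|/eqP->|xc].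
- case/splitPr: xa legS => a1 a2 legS.
  exists a1, (a2 ++ y :: u :: c); split; first by rewrite -catA.
  by apply: (legS a1 (a2 ++ u :: y :: c)); rewrite -catA.
- exists a, (u :: c); split=> //.
  apply: legal_le (legS (rcons a u) c y _); last by rewrite cat_rcons.
  by move=> w; rewrite /cover_count -cats1 count_cat leq_addr.
- by exists (rcons a y), c; rewrite cat_rcons.
- case/splitPr: xc legS => c1 c2 legS.
  exists (a ++ y :: u :: c1), c2; split; first by rewrite -catA.
  apply: legal_perm (legS (a ++ u :: y :: c1) c2 x _); last by rewrite -catA.
  exact: perm_swap_cons.
Qed.

Hypothesis e_sym : symmetric e.

Lemma mem_cnbhC x y : (x \in cnbh e y) = (y \in cnbh e x).
Proof. by rewrite !inE eq_sym e_sym. Qed.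

Section Twins.
Variables v v' : T.
Hypothesis twin : cnbh e v = cnbh e v'.

Lemma twin_mem_cnbh x : (v \in cnbh e x) = (v' \in cnbh e x).
Proof. by rewrite mem_cnbhC twin -mem_cnbhC. Qed.

Lemma twin_cover_count p : cover_count e p v = cover_count e p v'.
Proof. by apply: eq_count => x; exact: twin_mem_cnbh. Qed.

Lemma twin_NS1 S x : (v \in NS1 e S x) = (v' \in NS1 e S x).
Proof. by rewrite inE [RHS]inE twin_mem_cnbh twin_cover_count. Qed.

Lemma twin_NS2 S x : (v \in NS2 e S x) = (v' \in NS2 e S x).
Proof. by rewrite inE [RHS]inE twin_mem_cnbh twin_cover_count. Qed.

Lemma is_DNS_move_twin a b c :
  is_DNS e (a ++ v :: b ++ v' :: c) -> is_DNS e (a ++ b ++ v :: v' :: c).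
Proof.
elim: b a => [|y b IHb] a dnsS //.
have -> : a ++ (y :: b) ++ v :: v' :: c = rcons a y ++ b ++ v :: v' :: c.
  by rewrite cat_rcons.
apply: IHb; rewrite cat_rcons.
have legv' : legal (a ++ v :: y :: b) v' by apply: (dnsS.2 _ c); rewrite -catA.
apply: is_DNS_swap dnsS _; rewrite /legal -twin in legv'.
apply: legal_le legv' => w.
by rewrite /cover_count -cats1 !count_cat /= leq_add2l addn0 addnCA leq_addr.
Qed.

End Twins.

Lemma is_DNS_twins_adjacent v v' S :
  cnbh e v = cnbh e v' -> v != v' -> is_DNS e S -> v \in S -> v' \in S ->
  exists S' : seq T, [/\ is_DNS e S', S' =i S &
    exists p q : seq T, S' = p ++ v :: v' :: q \/ S' = p ++ v' :: v :: q].
Proof.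
move=> twin vv' dnsS vS; case/splitPr: vS dnsS => p q dnsS.
rewrite mem_cat inE eq_sym (negbTE vv') /= => /orP[v'p|v'q].
- case/splitPr: v'p dnsS => a b; rewrite -catA => dnsS.
  exists (a ++ b ++ v' :: v :: q); split.
  + exact: is_DNS_move_twin (esym twin) _ _ _ dnsS.
  + by apply/perm_mem; rewrite perm_sym perm_move_cons.
  + by exists (a ++ b), q; right; rewrite catA.
- case/splitPr: v'q dnsS => b c dnsS.
  exists (p ++ b ++ v :: v' :: c); split.
  + exact: is_DNS_move_twin twin _ _ _ dnsS.
  + by apply/perm_mem; rewrite perm_sym perm_move_cons.
  + by exists (p ++ b), c; left; rewrite catA.
Qed.

End DoubleNeighbourhoodSequence.

Theorem lemma2 (T : finType) (e : rel T) (e_sym : symmetric e)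
  (e_irr : irreflexive e) (v v' : T) (S : seq T) :
  v != v' -> cnbh e v = cnbh e v' -> is_DNS e S ->
  (forall x, x \in S ->
     (v' \in NS1 e S x -> v \in NS1 e S x) /\
     (v' \in NS2 e S x -> v \in NS2 e S x)) /\
  (v \in S -> v' \in S ->
     exists S' : seq T, [/\ is_DNS e S', S' =i S &
       exists p q : seq T, S' = p ++ v :: v' :: q \/ S' = p ++ v' :: v :: q]).
Proof.
move=> vv' twin dnsS; split; last exact: is_DNS_twins_adjacent.
by move=> x _; rewrite (twin_NS1 e_sym twin) (twin_NS2 e_sym twin).
Qed.
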